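(* Let $n\ge 3$ and consider the Markov chain on $\{0,1,\dots,n-1\}$ with $n\times n$ transition probability matrix $\mathbf P=(P_{ij})$ given by: $P_{00}=5/6$, $P_{01}=1/6$; $P_{10}=5/6$, $P_{12}=1/6$; for $2\le i\le n-2$: $P_{i0}=2/3$, $P_{i,i-1}=1/6$, $P_{i,i+1}=1/6$; $P_{n-1,0}=2/3$, $P_{n-1,n-2}=1/6$, $P_{n-1,n-1}=1/6$; all other entries $0$. Then the steady state probability vector $\vec\pi=(\pi_0,\dots,\pi_{n-1})$ (the unique probability vector with $\vec\pi=\vec\pi\mathbf P$) is given by $$\pi_i=\frac{B_{n-i}-B_{n-i-1}}{B_n},\qquad i=0,1,\dots,n-1.$$
   Context: The balancing numbers $B_m$ are defined by $B_0=0$, $B_1=1$, $B_{m+1}=6B_m-B_{m-1}$. *)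

From mathcomp Require Import all_boot all_order all_algebra.
Set Implicit Arguments. Unset Strict Implicit. Unset Printing Implicit Defensive.
Import Order.TTheory GRing.Theory Num.Theory.
Local Open Scope ring_scope.

Fixpoint balancing (m : nat) : int :=
  match m with
  | 0 => 0
  | 1 => 1
  | (m'.+1 as k).+1 => 6 * balancing k - balancing m'
  end.

Definition Pentry (R : fieldType) (n i j : nat) : R :=
  if i == 0%N then
    (if j == 0%N then 5/6 else if j == 1%N then 1/6 else 0)
  else if i == 1%N then
    (if j == 0%N then 5/6 else if j == 2%N then 1/6 else 0)
  else if i == n.-1 then
    (if j == 0%N then 2/3 else if j == n.-2 then 1/6
     else if j == n.-1 then 1/6 else 0)
  else
    (if j == 0%N then 2/3 else if j == i.-1 then 1/6
     else if j == i.+1 then 1/6 else 0).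

Definition transP (R : fieldType) (n : nat) : 'M[R]_n :=
  \matrix_(i < n, j < n) Pentry R n i j.

Definition is_prob_vec (R : numDomainType) (n : nat) (x : 'rV[R]_n) : Prop :=
  (forall i, 0 <= x 0 i) /\ \sum_(i < n) x 0 i = 1.

From mathcomp Require Import all_boot all_order all_algebra.
From mathcomp Require Import zify ring.
Set Implicit Arguments. Unset Strict Implicit. Unset Printing Implicit Defensive.
Import Order.TTheory GRing.Theory Num.Theory.
Local Open Scope ring_scope.

(* Read the chain backwards, y_k = pi_(n-k).  The equations of the columns
   1, ..., n-1 of pi P = pi become 6 y_k = y_(k+1) + y_(k-1) (+ y_1 when k = 1)
   with y_0 = 0, so y is determined by y_1.  The differences B_k - B_(k-1)
   (0, 1, 5, 29, ...) solve this recurrence and telescope to B_n, which forces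
   y_1 = 1 / B_n.  Column 0 then holds because
   5 (B_n - B_(n-1)) = 4 B_n + (B_(n-1) - B_(n-2)). *)

Lemma balancingSS k : balancing k.+2 = 6 * balancing k.+1 - balancing k.
Proof. by []. Qed.

Lemma balancing_ge0_lt k : 0 <= balancing k < balancing k.+1.
Proof.
elim: k => [//|k /andP[ge0 lt]]; rewrite balancingSS; lia.
Qed.

Definition balancing_diff (k : nat) : int := balancing k - balancing k.-1.

Lemma balancing_diff_ge0 k : 0 <= balancing_diff k.
Proof.
case: k => [//|k]; rewrite /balancing_diff subr_ge0 ltW //.
by case/andP: (balancing_ge0_lt k).
Qed.

Lemma sum_balancing_diff n : \sum_(i < n) balancing_diff (n - i) = balancing n.
Proof.
rewrite (reindex_inj rev_ord_inj) /=.
rewrite (eq_bigr (fun i : 'I_n => balancing i.+1 - balancing i)); last first.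
  by move=> i _; rewrite /balancing_diff subKn.
rewrite -(big_mkord xpredT (fun i => balancing i.+1 - balancing i)) telescope_sumr //.
by rewrite subr0.
Qed.

Lemma balancing_diff_top n : (2 <= n)%N ->
  6 * balancing_diff n = 4 * balancing n + balancing_diff n + balancing_diff n.-1.
Proof.
case: n => [//|[//|n] _]; rewrite /balancing_diff /=; ring.
Qed.

(* Column n - k of x P = x, written in the coordinates y_k = x_(n-k). *)
Definition stationary_at {R : ringType} (y : nat -> R) (k : nat) : Prop :=
  6 * y k = y k.+1 + y k.-1 + (k == 1)%:R * y k.

Lemma stationary_at_rmorph (R S : ringType) (f : {rmorphism R -> S}) (y : nat -> R) k :
  stationary_at y k -> stationary_at (f \o y) k.
Proof. by rewrite /stationary_at /= => e; rewrite -!(rmorph_nat f) -!rmorphM e !rmorphD. Qed.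

Lemma stationary_multiple (R : comRingType) (y c : nat -> R) N :
  c 0 = 0 -> c 1 = 1 -> y 0 = 0 ->
  (forall k, (0 < k < N)%N -> stationary_at c k) ->
  (forall k, (0 < k < N)%N -> stationary_at y k) ->
  forall k, (k <= N)%N -> y k = c k * y 1.
Proof.
move=> c0 c1 y0 hc hy.
suff step k : (k < N)%N -> y k = c k * y 1 /\ y k.+1 = c k.+1 * y 1.
  by case=> [|k] hk; [rewrite y0 c0 mul0r | case: (step k hk)].
elim: k => [|k IH] hk; first by rewrite y0 c0 c1 mul0r mul1r.
have [yk yk1] := IH (ltnW hk); split=> //.
have /hy ey : (0 < k.+1 < N)%N by [].
have /hc ec : (0 < k.+1 < N)%N by [].
have -> : y k.+2 = 6 * y k.+1 - y k - (k.+1 == 1)%:R * y k.+1 by rewrite ey; ring.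
have -> : c k.+2 = 6 * c k.+1 - c k - (k.+1 == 1)%:R * c k.+1 by rewrite ec; ring.
rewrite yk yk1; ring.
Qed.

Lemma balancing_diff_stationary k : (0 < k)%N -> stationary_at balancing_diff k.
Proof. by case: k => [//|[//|k] _]; rewrite /stationary_at /balancing_diff /=; ring. Qed.

Definition row_entry {R : ringType} {n} (x : 'rV[R]_n) (k : nat) : R :=
  if insub k is Some i then x 0 i else 0.

Section RowEntry.
Variables (R : ringType) (n : nat).
Implicit Type x : 'rV[R]_n.

Lemma row_entry_ord x (i : 'I_n) : row_entry x i = x 0 i.
Proof. by rewrite /row_entry valK. Qed.

Lemma row_entry_lt x k (hk : (k < n)%N) : row_entry x k = x 0 (Ordinal hk).
Proof. by rewrite -row_entry_ord. Qed.

Lemma row_entry_out x k : (n <= k)%N -> row_entry x k = 0.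
Proof. by move=> hk; rewrite /row_entry insubN // -leqNgt. Qed.

Lemma sum_mul_indicator x k : \sum_(i < n) x 0 i * ((i : nat) == k)%:R = row_entry x k.
Proof.
have [hk|hk] := ltnP k n; last first.
  rewrite row_entry_out // big1 // => i _.
  by rewrite (_ : (i : nat) == k = false) ?mulr0 //; apply/negbTE; rewrite neq_ltn (leq_trans _ hk).
rewrite (bigD1 (Ordinal hk)) //= eqxx mulr1 big1 ?addr0 -?row_entry_lt // => i.
by rewrite -val_eqE /= => /negbTE ->; rewrite mulr0.
Qed.

End RowEntry.

Section TransitionColumns.
Variables (R : numFieldType) (n : nat).
Hypothesis hn : (3 <= n)%N.

Lemma Pentry_col0 i : (i < n)%N ->
  Pentry R n i 0 = 2/3 + ((i == 0)%N%:R + (i == 1)%N%:R) / 6.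
Proof.
move=> hi; rewrite /Pentry /=.
repeat match goal with |- context[(?a == ?b)%N] => case: (a =P b) => ? end; try lia;
  rewrite /= ?(mul0r, add0r, addr0) //.
all: field; by rewrite ?pnatr_eq0.
Qed.

Lemma Pentry_colS i j : (i < n)%N -> (0 < j < n)%N ->
  Pentry R n i j = ((i == j.-1)%:R + (i == j.+1)%:R + (i == j)%:R * (j == n.-1)%:R) / 6.
Proof.
move=> hi /andP[hj0 hjn]; rewrite /Pentry /=.
repeat match goal with |- context[(?a == ?b)%N] => case: (a =P b) => ? end; try lia;
  rewrite /= ?(mul0r, mulr0, add0r, addr0, mul1r, mulr1) //.
Qed.

Lemma row_entry_mul_transP_0 (x : 'rV[R]_n) :
  row_entry (x *m transP R n) 0 = 2/3 * \sum_(i < n) x 0 i + (row_entry x 0 + row_entry x 1) / 6.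
Proof.
have hn0 : (0 < n)%N by lia.
rewrite (row_entry_lt _ hn0) mxE -!sum_mul_indicator mulr_sumr -big_split mulr_suml -big_split /=.
apply: eq_bigr => i _; rewrite mxE Pentry_col0 //; ring.
Qed.

Lemma row_entry_mul_transP_S (x : 'rV[R]_n) j : (0 < j < n)%N ->
  row_entry (x *m transP R n) j =
    (row_entry x j.-1 + row_entry x j.+1 + (j == n.-1)%:R * row_entry x j) / 6.
Proof.
move=> hj; have hjn : (j < n)%N by case/andP: hj.
rewrite (row_entry_lt _ hjn) mxE -!sum_mul_indicator mulr_sumr -!big_split mulr_suml /=.
apply: eq_bigr => i _; rewrite mxE Pentry_colS //; ring.
Qed.

End TransitionColumns.

Lemma transP_fixedP (R : numFieldType) n (x : 'rV[R]_n) : (3 <= n)%N ->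
  x *m transP R n = x <->
  6 * row_entry x 0 = 4 * \sum_(i < n) x 0 i + row_entry x 0 + row_entry x 1 /\
  forall k, (0 < k < n)%N -> stationary_at (fun k => row_entry x (n - k)) k.
Proof.
move=> hn; have nat6 : (6 : R) != 0 by rewrite pnatr_eq0.
have mirror k : (0 < k < n)%N ->
  [/\ (0 < n - k < n)%N, (n - k).-1 = n - k.+1, (n - k).+1 = n - k.-1
    & (n - k == n.-1) = (k == 1)]%N.
  by move=> hk; split; [lia | lia | lia | apply/eqP/eqP; lia].
split=> [fixx | [col0 colS]].
  split=> [|k hk].
    by have := row_entry_mul_transP_0 hn x; rewrite fixx => {1}->; field.
  have [hj e1 e2 e3] := mirror k hk.
  have := row_entry_mul_transP_S hn x hj; rewrite fixx e1 e2 e3 /stationary_at /= => {1}->.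
  by field.
apply/rowP => -[[|j] hj]; rewrite -!row_entry_ord /=.
  by rewrite row_entry_mul_transP_0 //; apply: (mulfI nat6); rewrite [RHS]col0; field.
pose k := (n - j.+1)%N; have hk : (0 < k < n)%N by lia.
have nk : (n - k = j.+1)%N by lia.
have [_ e1 e2 e3] := mirror k hk; rewrite nk /= in e1 e2 e3.
have := colS k hk; rewrite /stationary_at /= -e1 -e2 -e3 nk => colk.
by rewrite row_entry_mul_transP_S //; apply: (mulfI nat6); rewrite [RHS]colk; field.
Qed.

Section BalancingRow.
Variables (R : numFieldType) (n : nat).
Hypothesis hn : (3 <= n)%N.

Definition balancing_row : 'rV[R]_n :=
  \row_(i < n) ((balancing_diff (n - i))%:~R / (balancing n)%:~R).

Let balancing_gt0 : 0 < (balancing n)%:~R :> R.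
Proof.
case: n hn => // m _; rewrite ltr0z.
by case/andP: (balancing_ge0_lt m) => /le_lt_trans; apply.
Qed.

Let sum_balancing_diffR : \sum_(i < n) (balancing_diff (n - i))%:~R = (balancing n)%:~R :> R.
Proof. by rewrite -sum_balancing_diff rmorph_sum. Qed.

Lemma row_entry_balancing_row k :
  row_entry balancing_row k = (balancing_diff (n - k))%:~R / (balancing n)%:~R.
Proof.
have [hk|hk] := ltnP k n; first by rewrite (row_entry_lt _ hk) mxE.
by rewrite row_entry_out // (eqnP hk) mul0r.
Qed.

Lemma balancing_row_prob_vec : is_prob_vec balancing_row.
Proof.
split=> [i|]; first by rewrite mxE divr_ge0 ?(ltW balancing_gt0) ?ler0z ?balancing_diff_ge0.
under eq_bigr do rewrite /balancing_row mxE.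
by rewrite -mulr_suml sum_balancing_diffR divff ?lt0r_neq0.
Qed.

Lemma balancing_row_stationary : balancing_row *m transP R n = balancing_row.
Proof.
apply/transP_fixedP => //; split=> [|k /andP[k0 kn]].
  rewrite !row_entry_balancing_row subn0 subn1.
  have b0 := lt0r_neq0 balancing_gt0.
  rewrite (proj2 balancing_row_prob_vec) mulr1 mulrA -[4](mulfK b0) -!mulrDl; congr (_ / _).
  by rewrite -[6]/(6%:~R) -[4]/(4%:~R) -!intrM -!intrD balancing_diff_top 1?ltnW.
have [hk1 hk2] : (k.-1 <= n /\ k.+1 <= n)%N by lia.
rewrite /stationary_at !row_entry_balancing_row !subKn ?hk1 ?hk2 ?(ltnW kn) //.
have := stationary_at_rmorph intr (balancing_diff_stationary k0); rewrite /stationary_at /= => e.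
by rewrite !mulrA -!mulrDl e.
Qed.

Lemma fixed_transP_eq_balancing_row (x : 'rV[R]_n) :
  \sum_(i < n) x 0 i = 1 -> x *m transP R n = x -> x = balancing_row.
Proof.
move=> sum1 /(transP_fixedP x hn)[_ colS].
pose c k : R := (balancing_diff k)%:~R.
have cS k : (0 < k < n)%N -> stationary_at c k.
  by case/andP=> k0 _; apply: (stationary_at_rmorph intr (balancing_diff_stationary k0)).
have shape k : (k <= n)%N -> row_entry x (n - k) = c k * row_entry x (n - 1).
  apply: (stationary_multiple (y := fun k => row_entry x (n - k))) => //.
  by rewrite subn0 row_entry_out.
have xE (i : 'I_n) : x 0 i = c (n - i)%N * row_entry x (n - 1).
  by rewrite -row_entry_ord -shape ?leq_subr // subKn // ltnW.
have scale : (balancing n)%:~R * row_entry x (n - 1) = 1.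
  by rewrite -[RHS]sum1 -sum_balancing_diffR mulr_suml; apply: eq_bigr => i _; rewrite xE.
apply/rowP => i; rewrite xE mxE -[row_entry x _](mulKf (lt0r_neq0 balancing_gt0)) scale.
by rewrite mulr1.
Qed.

End BalancingRow.

Theorem theorem2p3 (R : realFieldType) (n : nat) (hn : (3 <= n)%N) :
  let pi : 'rV[R]_n :=
    \row_(i < n) ((balancing (n - i) - balancing (n - i - 1))%:~R
                  / (balancing n)%:~R) in
  [/\ is_prob_vec pi,
      pi *m transP R n = pi
    & forall x : 'rV[R]_n, is_prob_vec x -> x *m transP R n = x -> x = pi].
Proof.
move=> pi; have -> : pi = balancing_row R n by apply/rowP => i; rewrite !mxE subn1.
split; [exact: balancing_row_prob_vec | exact: balancing_row_stationary |].
by move=> x [_ sum1]; apply: fixed_transP_eq_balancing_row.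
Qed.
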